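(* For every base $b\ge 2$ there exist infinitely many positive integers that are not $b$-wARH numbers.
   Context: Fix a base $b\ge 2$. $s_b(N)$ is the sum of the base-$b$ digits of $N$. For a positive integer $X$, its reversal $X^R$ is the integer whose base-$b$ representation is that of $X$ written in reverse order (leading zeros of the result are dropped). A positive integer $N$ is a $b$-wARH number if there exists an integer $A\ge 0$ such that $N=(A+s_b(N))+(A+s_b(N))^R$. *)

From mathcomp Require Import all_boot.
Set Implicit Arguments. Unset Strict Implicit. Unset Printing Implicit Defensive.

(* Base-b digits of n, least significant first (empty list for n = 0).
   Fuel n suffices since n %/ b < n for n > 0 and b >= 2. *)
Fixpoint digits_aux (b fuel n : nat) : seq nat :=
  match fuel with
  | 0 => [::]
  | fuel'.+1 => if n == 0 then [::] else (n %% b) :: digits_aux b fuel' (n %/ b)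
  end.

Definition digits (b n : nat) : seq nat := digits_aux b n n.

Definition from_digits (b : nat) (s : seq nat) : nat :=
  foldr (fun d acc => d + b * acc) 0 s.

Definition digit_sum (b n : nat) : nat := sumn (digits b n).

(* X^R: reverse the base-b representation (leading zeros of the result
   disappear automatically when evaluating). *)
Definition reversal (b n : nat) : nat := from_digits b (rev (digits b n)).

Definition is_wARH (b N : nat) : Prop :=
  0 < N /\ exists A : nat, N = (A + digit_sum b N) + reversal b (A + digit_sum b N).

From mathcomp Require Import all_boot.
From mathcomp Require Import zify.
Set Implicit Arguments. Unset Strict Implicit. Unset Printing Implicit Defensive.

(* For every base b >= 2 and every d >= 2, the power b ^ d is not of the form
   X + X^R.  Since every A + s_b(N) is some X, no such power is b-wARH, and the
   powers b ^ m.+2 are unboundedly many non-wARH numbers.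

   Write u = digits b X (least significant first, last digit nonzero) and
   sum_rev b u = from_digits b u + from_digits b (rev u) = X + X^R.
   - sum_rev_pow_size: if sum_rev b u = b ^ d then d = size u, because
     b ^ (size u).-1 < sum_rev b u < 2 * b ^ size u <= b ^ (size u).+1.
   - sum_rev_not_pow: if moreover size u >= 2, the lowest digit of the sum is
     x0 + xt (first plus last digit of u), so b divides x0 + xt > 0; then the
     contributions x0 + xt at the bottom and b ^ (size u).-1 * (x0 + xt) at
     the top already exceed b ^ size u. *)

Lemma from_digits_cat b s1 s2 :
  from_digits b (s1 ++ s2) = from_digits b s1 + b ^ size s1 * from_digits b s2.
Proof.
elim: s1 => [|x s IH] /=; first by rewrite expn0 mul1n.
by rewrite IH expnS; lia.
Qed.

Lemma from_digits_rcons b s x :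
  from_digits b (rcons s x) = from_digits b s + b ^ size s * x.
Proof. by rewrite -cats1 from_digits_cat /= muln0 addn0. Qed.

Lemma from_digits_lt b s :
  all (fun d => d < b) s -> from_digits b s < b ^ size s.
Proof.
elim: s => [|x s IH] //= /andP [hx /IH hs].
by rewrite expnS; nia.
Qed.

Section Digits.
Variable b : nat.
Hypothesis hb : 2 <= b.

Lemma digits_aux0 f : digits_aux b f 0 = [::].
Proof. by case: f. Qed.

Lemma digits_aux_ltb f n : all (fun d => d < b) (digits_aux b f n).
Proof.
elim: f n => [|f IH] n //=.
by case: (n == 0) => //=; rewrite IH andbT ltn_mod; lia.
Qed.

Lemma digits_ltb n : all (fun d => d < b) (digits b n).
Proof. exact: digits_aux_ltb. Qed.

Lemma from_digits_aux f n : n <= f -> from_digits b (digits_aux b f n) = n.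
Proof.
elim: f n => [|f IH] n /=; first by rewrite leqn0 => /eqP ->.
move=> hn; case: eqP => [->|/eqP n0] //=.
have ltq : n %/ b < n by rewrite ltn_Pdiv //; lia.
by rewrite IH; [rewrite addnC mulnC -divn_eq | lia].
Qed.

Lemma from_digitsK n : from_digits b (digits b n) = n.
Proof. exact: from_digits_aux. Qed.

Lemma digits_aux_last f n x : n <= f -> 0 < n -> 0 < last x (digits_aux b f n).
Proof.
elim: f n x => [|f IH] n x /=; first lia.
move=> hn n0; have -> /= : (n == 0) = false by lia.
have [q0|q_pos] := posnP (n %/ b).
  have nb : n < b by rewrite ltnNge -divn_gt0 ?q0 //; lia.
  by rewrite q0 digits_aux0 /= modn_small.
have ltq : n %/ b < n by rewrite ltn_Pdiv //; lia.
apply: IH => //; lia.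
Qed.

Lemma digits_last n : 0 < n -> 0 < last 0 (digits b n).
Proof. exact: digits_aux_last. Qed.

End Digits.

Definition sum_rev (b : nat) (u : seq nat) : nat :=
  from_digits b u + from_digits b (rev u).

Lemma sum_rev_digits b X : 2 <= b -> sum_rev b (digits b X) = X + reversal b X.
Proof. by move=> hb; rewrite /sum_rev from_digitsK. Qed.

Section SumRev.
Variable b : nat.
Hypothesis hb : 2 <= b.

(* b ^ (size u).-1 < sum_rev b u < b ^ (size u).+1, so only the power
   b ^ size u can equal sum_rev b u. *)
Lemma sum_rev_pow_size s x d :
  all (fun d => d < b) (rcons s x) -> 0 < x ->
  sum_rev b (rcons s x) = b ^ d -> d = (size s).+1.
Proof.
move=> digs x0 E.
have bpos : 0 < b by lia.
have hi : from_digits b (rcons s x) < b ^ (size s).+1.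
  by rewrite -(size_rcons s x) from_digits_lt.
have hiR : from_digits b (rev (rcons s x)) < b ^ (size s).+1.
  by rewrite -(size_rcons s x) -size_rev from_digits_lt // all_rev.
have lo : b ^ size s * x <= from_digits b (rcons s x).
  by rewrite from_digits_rcons leq_addl.
have loR : 0 < from_digits b (rev (rcons s x)) by rewrite rev_rcons /=; lia.
have ltd : size s < d.
  rewrite -(ltn_exp2l _ _ hb) -E /sum_rev.
  by have := leq_pmulr (b ^ size s) x0; lia.
have dlt : d < (size s).+2.
  rewrite -(ltn_exp2l _ _ hb) -E /sum_rev (expnS b (size s).+1).
  by nia.
lia.
Qed.

(* The two end digits x0, xt of u contribute x0 + xt both at the bottom and,
   scaled by b ^ (size u).-1, at the top; a power of b forces b %| x0 + xt,
   which makes the sum too large. *)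
Lemma sum_rev_not_pow x0 t xt :
  0 < xt -> sum_rev b (x0 :: rcons t xt) <> b ^ (size t).+2.
Proof.
move=> xt0 E.
have split_sum : sum_rev b (x0 :: rcons t xt) =
    (x0 + xt) * (1 + b ^ (size t).+1) + b * (from_digits b t + from_digits b (rev t)).
  rewrite /sum_rev rev_cons rev_rcons from_digits_rcons /= from_digits_rcons.
  by rewrite size_rev expnS; lia.
have bdiv : b %| x0 + xt.
  have : b %| b ^ (size t).+2 by rewrite expnS dvdn_mulr.
  rewrite -E split_sum (expnS b (size t)).
  have -> : forall y z p, y * (1 + b * p) + b * z = y + b * (y * p + z) by lia.
  by rewrite dvdn_addl // dvdn_mulr.
have bx : b <= x0 + xt by apply: dvdn_leq => //; lia.
move: E; rewrite split_sum (expnS b (size t).+1) => E.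
have : b * (1 + b ^ (size t).+1) <= (x0 + xt) * (1 + b ^ (size t).+1).
  by rewrite leq_mul2r bx orbT.
lia.
Qed.

Lemma pow_not_sum_reversal d X : 2 <= d -> X + reversal b X <> b ^ d.
Proof.
move=> d2; rewrite -sum_rev_digits //.
have [->|X0] := posnP X.
  by rewrite /digits /sum_rev /=; have := expn_gt0 b d; lia.
have digs := digits_ltb hb X; have top := digits_last hb X0.
case/lastP: (digits b X) digs top => [|s xt] digs; first by [].
rewrite last_rcons => xt0 E.
have {digs} dsize := sum_rev_pow_size digs xt0 E.
case: s dsize E => [|x0 t] /= dsize E; first lia.
by apply: (sum_rev_not_pow (x0 := x0) (t := t) xt0); rewrite -dsize.
Qed.

End SumRev.

Theorem proposition9 (b : nat) (hb : 2 <= b) :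
  forall m : nat, exists N : nat, m < N /\ ~ is_wARH b N.
Proof.
move=> m; exists (b ^ m.+2); split; first by have := ltn_expl m.+2 hb; lia.
by case=> _ [A E]; apply: (pow_not_sum_reversal hb (_ : 2 <= m.+2)) (esym E).
Qed.
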